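(* Let $p$ be a prime number and let $n$ be a positive integer. Then $S_n(n)\equiv p \pmod{n}$ (i.e. $n\in\mathcal{M}_p$) if and only if all of the following hold: (i) the prime power factorization of $n$ has the form $n=p^s q_1\cdots q_r$, where $0\le s\le 2$ and $q_1,\dots,q_r$ are pairwise distinct primes different from $p$ (each appearing with exponent $1$); (ii) for every $i\in\{1,\dots,r\}$, $q_i-1$ divides $n$ and $n/q_i+p\equiv 0\pmod{q_i}$; (iii) if $s=1$, then $p-1\nmid n$; (iv) if $s=2$, then $p-1\mid n$ and $n/p^2+1\equiv 0\pmod{p}$.
   Context: For positive integers $k,n$ let $S_k(n)=\sum_{i=1}^{n} i^k$. For an integer $a$, $\mathcal{M}_a$ denotes the set of positive integers $n$ such that $S_n(n)\equiv a\pmod{n}$. *)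

From mathcomp Require Import all_boot.
Set Implicit Arguments. Unset Strict Implicit. Unset Printing Implicit Defensive.

Definition S (k n : nat) : nat := \sum_(1 <= i < n.+1) i ^ k.

From mathcomp Require Import all_boot finalg zmodp fingroup cyclic.
Set Implicit Arguments. Unset Strict Implicit. Unset Printing Implicit Defensive.

(* Work modulo each prime power q ^ e exactly dividing n. By periodicity,
   S_n(n) = (n / q ^ e) * sum_(0 <= i < q ^ e) i ^ n modulo q ^ e. If q - 1 does
   not divide n, multiplication by a primitive root a (with a ^ n <> 1 mod q)
   permutes the residues and multiplies the sum by a ^ n, so the sum vanishes;
   if q - 1 divides n, then phi(q ^ e) divides n, so the units contribute 1 each
   and the non-units 0, and the sum is phi(q ^ e). Comparing (n / q ^ e) * phi(q ^ e)
   or 0 with p modulo q ^ e gives the local form of (i)-(iv), and the Chinese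
   remainder theorem assembles the prime powers. *)

Definition S0 (k m : nat) : nat := \sum_(0 <= i < m) i ^ k.

Lemma S_S0 k m : 0 < k -> S k m = S0 k m + m ^ k.
Proof.
by move=> k0; rewrite /S0 -big_nat_recr //= big_ltn // exp0n.
Qed.

Lemma S_S0_mod k m d : 0 < k -> d %| m -> S k m = S0 k m %[mod d].
Proof.
move=> k0 dm; rewrite S_S0 // -modnDmr.
have /eqP -> : d %| m ^ k by rewrite (dvdn_trans dm) // dvdn_exp.
by rewrite addn0.
Qed.

Lemma S0_mul_mod k m c : S0 k (c * m) = c * S0 k m %[mod m].
Proof.
elim: c => [|c IHc]; first by rewrite /S0 !mul0n big_geq.
have shift : S0 k m = \sum_(c * m <= i < c * m + m) i ^ k %[mod m].
  rewrite /S0 -[c * m]add0n big_addn addKn -[LHS]modn_summ -[RHS]modn_summ.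
  by congr (_ %% _); apply: eq_bigr => i _; rewrite -[RHS]modnXm addnC modnMDl modnXm.
rewrite /S0 mulSnr (@big_cat_nat _ _ _ (c * m)) ?leq_addr //= -/(S0 k (c * m)).
by rewrite -modnDm IHc -shift modnDm mulSnr.
Qed.

Lemma modn_mul2l_coprime m a x y :
  coprime a m -> a * x = a * y %[mod m] -> x = y %[mod m].
Proof.
move=> co_am; wlog le_xy : x y / x <= y => [hwlog|].
  by case: (leqP x y) => [|/ltnW] le; [exact: hwlog | move/esym/hwlog->].
move/esym/eqP; rewrite eqn_mod_dvd ?leq_mul2l ?le_xy ?orbT // -mulnBr.
by rewrite Gauss_dvdr 1?coprime_sym // -eqn_mod_dvd // eq_sym => /eqP.
Qed.

Lemma coprime_gt0 a m : 1 < m -> coprime a m -> 0 < a.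
Proof.
by case: a => // m_gt1; rewrite /coprime gcd0n => /eqP m1; rewrite m1 in m_gt1.
Qed.

Lemma S0_mod_eq0 k m a : coprime a m -> coprime (a ^ k).-1 m -> S0 k m %% m = 0.
Proof.
move=> co_am co_akm; have [m_le1|m_gt1] := leqP m 1.
  by case: m m_le1 {co_am co_akm} => [|[|]] // _; rewrite ?modn1 // /S0 big_geq.
have a_gt0 := coprime_gt0 m_gt1 co_am.
pose mul_a (i : 'I_m) : 'I_m := Ordinal (ltn_pmod (a * i) (ltnW m_gt1)).
have mul_a_inj : injective mul_a.
  move=> i j /(congr1 val) /= /(modn_mul2l_coprime co_am).
  by rewrite !modn_small // => /val_inj.
have S0_invariant : S0 k m = a ^ k * S0 k m %[mod m].
  rewrite {1}/S0 big_mkord (reindex_inj mul_a_inj) /= /S0 big_mkord big_distrr.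
  rewrite -[LHS]modn_summ -[RHS]modn_summ /=; congr (_ %% _).
  by apply: eq_bigr => i _; rewrite modnXm expnMn.
move/eqP: S0_invariant; rewrite eq_sym eqn_mod_dvd ?leq_pmull ?expn_gt0 ?a_gt0 //.
rewrite -{2}[S0 k m]mul1n -mulnBl subn1 Gauss_dvdr 1?coprime_sym //.
by move/eqP.
Qed.

Lemma S0_pfactor_mod q e k : prime q -> totient (q ^ e) %| k -> e <= k ->
  S0 k (q ^ e) = totient (q ^ e) %[mod q ^ e].
Proof.
case: e => [|e] q_pr tot_k le_ek; first by rewrite !modn1.
have qe_gt1 : 1 < q ^ e.+1 by rewrite -{1}(expn0 q) ltn_exp2l ?prime_gt1.
rewrite /S0 totient_count_coprime -[LHS]modn_summ -[RHS]modn_summ.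
congr (_ %% _); apply: eq_bigr => i _.
have [co_i|] := boolP (coprime (q ^ e.+1) i).
  rewrite -(divnK tot_k) mulnC expnM -modnXm.
  by rewrite Euler_exp_totient 1?coprime_sym // modnXm exp1n modn_small.
rewrite coprime_pexpl // prime_coprime // negbK => q_dvd_i.
by rewrite mod0n; apply/eqP; apply: dvdn_trans (dvdn_exp2l q le_ek) (dvdn_exp2r _ _).
Qed.

Lemma exists_pow_modn_neq1 q k : prime q -> ~~ (q.-1 %| k) ->
  exists2 a, coprime a q & a ^ k %% q != 1.
Proof.
move=> q_pr ndvd_k; have q_gt1 := prime_gt1 q_pr.
have /cyclicP [x def_units] := units_Zp_cyclic q_pr.
have ord_x : #[x]%g = q.-1.
  by rewrite /order -def_units card_units_Zp ?prime_gt0 // totient_prime.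
exists (val (val x)).
  by rewrite coprime_sym -(unitZpE _ q_gt1) natr_Zp (valP x).
apply: contra ndvd_k => /eqP xk1; rewrite -ord_x order_dvdn.
apply/eqP/val_inj/val_inj.
by rewrite unit_Zp_expg /= [X in _ %% X = _]Zp_cast.
Qed.

Lemma eqn_mul_pred_mod q c x : 0 < q -> (c * q.-1 == x %[mod q]) = (q %| c + x).
Proof.
move=> q_gt0; rewrite -(eqn_modDr c) -mulnSr prednK // modnMl.
by rewrite [x + c]addnC eq_sym.
Qed.

Lemma eqn_mul_totient_pfactor_mod q e c x : prime q -> 0 < e -> ~~ (q %| x) ->
  (c * totient (q ^ e) == x %[mod q ^ e]) = (e == 1) && (q %| c + x).
Proof.
move=> q_pr e_gt0 ndvd_x; rewrite totient_pfactor //.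
case: e e_gt0 => [//|[|e]] _; first by rewrite muln1 expn1 eqn_mul_pred_mod ?prime_gt0.
have q_dvd : q %| c * (q.-1 * q ^ e.+1) by rewrite !dvdn_mull // expnS dvdn_mulr.
apply: contraNF ndvd_x => /eqP/(congr1 (modn^~ q)).
by rewrite !modn_dvdm ?dvdn_exp // (eqP q_dvd) => /esym/eqP.
Qed.

Lemma eqn_mul_totient_pfactor_mod_self p e c : prime p -> 0 < e -> ~~ (p %| c) ->
  (c * totient (p ^ e) == p %[mod p ^ e]) = (e == 2) && (p %| c + 1).
Proof.
move=> p_pr e_gt0 ndvd_c; have p_gt0 := prime_gt0 p_pr.
rewrite totient_pfactor //; case: e e_gt0 => [//|[|[|e]]] _.
- by rewrite muln1 expn1 eqn_mul_pred_mod // dvdn_addl // (negbTE ndvd_c).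
- rewrite mulnA expn1 expnS expn1 -[p in _ == p %[mod _]]mul1n -!muln_modl.
  by rewrite eqn_pmul2r // eqn_mul_pred_mod.
have pp_dvd : p ^ 2 %| c * (p.-1 * p ^ e.+2).
  by do 2 apply: dvdn_mull; apply: dvdn_exp2l.
apply/negbTE/negP => /eqP/(congr1 (modn^~ (p ^ 2))).
rewrite !modn_dvdm ?dvdn_exp2l // (eqP pp_dvd) modn_small ?(ltn_exp2l 1) ?prime_gt1 //.
by move=> p0; rewrite -p0 in p_gt0.
Qed.

Lemma S_self_modn d n : 0 < n -> d %| n -> S n n = n %/ d * S0 n d %[mod d].
Proof. by move=> n_gt0 d_dvd; rewrite S_S0_mod // -{2}(divnK d_dvd) S0_mul_mod. Qed.

(* Conditions (i)-(iv) at the prime q, where q ^ e exactly divides n. *)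
Definition Mp_local (p n q e : nat) : bool :=
  if q == p then
    ((e == 1) && ~~ (p.-1 %| n)) || [&& e == 2, p.-1 %| n & p %| n %/ p ^ 2 + 1]
  else [&& e == 1, q.-1 %| n & q %| n %/ q + p].

Section PrimePowerFactor.

Variables (q e c n : nat).
Hypotheses (q_pr : prime q) (ndvd_c : ~~ (q %| c)) (def_n : n = c * q ^ e).
Hypotheses (e_gt0 : 0 < e) (n_gt0 : 0 < n).

Let qe_dvd_n : q ^ e %| n. Proof. by rewrite def_n dvdn_mull. Qed.

Let div_qe : n %/ q ^ e = c.
Proof. by rewrite def_n mulnK // expn_gt0 prime_gt0. Qed.

Lemma S_self_mod_pfactor_dvd : q.-1 %| n -> S n n = c * totient (q ^ e) %[mod q ^ e].
Proof.
move=> dvd_n; rewrite S_self_modn // div_qe -modnMmr S0_pfactor_mod ?modnMmr //.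
  rewrite totient_pfactor // Gauss_dvd ?coprimeXr ?coprimePn ?prime_gt0 // dvd_n /=.
  by rewrite (dvdn_trans _ qe_dvd_n) ?dvdn_exp2l ?leq_pred.
apply: ltnW; apply: leq_trans (ltn_expl e (prime_gt1 q_pr)) (dvdn_leq n_gt0 qe_dvd_n).
Qed.

Lemma S_self_mod_pfactor_ndvd : ~~ (q.-1 %| n) -> S n n %% q ^ e = 0.
Proof.
move=> ndvd_n; have [a co_aq ak_neq1] := exists_pow_modn_neq1 q_pr ndvd_n.
have a_gt0 := coprime_gt0 (prime_gt1 q_pr) co_aq.
rewrite S_self_modn // -modnMmr (@S0_mod_eq0 _ _ a) ?muln0 ?mod0n ?coprimeXr //.
rewrite coprime_sym prime_coprime //; apply: contra ak_neq1 => q_dvd.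
have ak_gt0 : 0 < a ^ n by rewrite expn_gt0 a_gt0.
by rewrite -(prednK ak_gt0) -addn1 -modnDml (eqP q_dvd) modn_small ?prime_gt1.
Qed.

Lemma eqn_S_self_mod_pfactor p : prime p ->
  (S n n == p %[mod q ^ e]) = Mp_local p n q e.
Proof.
move=> p_pr; rewrite /Mp_local; have [dvd_n|ndvd_n] := boolP (q.-1 %| n).
  rewrite S_self_mod_pfactor_dvd //; have [<-|ne_qp] := eqVneq q p.
    rewrite eqn_mul_totient_pfactor_mod_self // dvd_n andbF /=.
    by case: eqP => // e2; rewrite -div_qe e2.
  have ndvd_p : ~~ (q %| p) by rewrite dvdn_prime2.
  rewrite eqn_mul_totient_pfactor_mod //.
  by case: eqP => //= e1; rewrite -div_qe e1 expn1.
rewrite S_self_mod_pfactor_ndvd // [0 == _]eq_sym -/(dvdn _ _).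
rewrite pfactor_dvdn ?prime_gt0 // logn_prime //.
case: eqVneq => [<-|_]; last by rewrite andFb andbF leqn0 eqn0Ngt e_gt0.
by rewrite (negbTE ndvd_n) andbT andbF orbF eqn_leq e_gt0 andbT.
Qed.

End PrimePowerFactor.

Lemma eqn_mod_partn x y n : 0 < n ->
  (x == y %[mod n]) = all (fun q => x == y %[mod q ^ logn q n]) (primes n).
Proof.
move=> n_gt0; wlog le_yx : x y / y <= x => [hwlog|].
  case: (leqP y x) => [|/ltnW]; first exact: hwlog.
  move/hwlog; rewrite [x == y %[mod n]]eq_sym => ->.
  by apply: eq_all => q; rewrite eq_sym.
rewrite eqn_mod_dvd //; apply/dvdn_partP/allP => // dvd_q q q_in.
  by rewrite eqn_mod_dvd // -p_part dvd_q.
by rewrite p_part -eqn_mod_dvd // dvd_q.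
Qed.

Lemma eqn_S_self_mod_prime p n : prime p -> 0 < n ->
  (S n n == p %[mod n]) = all (fun q => Mp_local p n q (logn q n)) (primes n).
Proof.
move=> p_pr n_gt0; rewrite eqn_mod_partn //; apply: eq_in_all => q q_in.
have q_pr : prime q by move: q_in; rewrite mem_primes => /andP[].
have [c co_qc def_n] := pfactor_coprime q_pr n_gt0.
by rewrite (eqn_S_self_mod_pfactor q_pr _ def_n) -?prime_coprime ?logn_gt0.
Qed.

Lemma prod_primes_gt0 qs : all prime qs -> 0 < \prod_(q <- qs) q.
Proof.
move=> /allP qs_pr; rewrite big_seq_cond prodn_cond_gt0 // => q /andP[q_in _].
exact/prime_gt0/qs_pr.
Qed.

Lemma logn_pexp_prod p s qs r : prime p -> uniq qs -> all prime qs ->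
  logn r (p ^ s * \prod_(q <- qs) q) = (r == p) * s + (r \in qs).
Proof.
move=> p_pr uniq_qs qs_pr.
rewrite lognM ?expn_gt0 ?prod_primes_gt0 ?prime_gt0 // lognX logn_prime // mulnC.
congr (_ + _); rewrite -count_uniq_mem //; elim: qs {uniq_qs} qs_pr => [|q qs IHqs].
  by rewrite big_nil logn1.
move=> /andP[q_pr qs_pr].
rewrite big_cons lognM ?(prime_gt0 q_pr) ?prod_primes_gt0 //.
by rewrite logn_prime // IHqs // eq_sym.
Qed.

Definition Mp_factorization (p n : nat) : Prop :=
  exists (s : nat) (qs : seq nat),
    (s <= 2 /\ uniq qs /\ all prime qs /\ p \notin qs /\
     n = p ^ s * \prod_(q <- qs) q) /\
    (forall q, q \in qs -> (q.-1 %| n) /\ (n %/ q + p) %% q = 0) /\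
    (s = 1 -> ~~ (p.-1 %| n)) /\
    (s = 2 -> (p.-1 %| n) /\ (n %/ p ^ 2 + 1) %% p = 0).

Lemma Mp_factorization_of_local p n : prime p -> 0 < n ->
  all (fun q => Mp_local p n q (logn q n)) (primes n) -> Mp_factorization p n.
Proof.
move=> p_pr n_gt0 /allP loc.
have loc_p : 0 < logn p n -> Mp_local p n p (logn p n) by rewrite logn_gt0 => /loc.
have loc_q q : q \in primes n -> q != p ->
    [&& logn q n == 1, q.-1 %| n & q %| n %/ q + p].
  by move=> /loc; rewrite /Mp_local => /[swap] /negbTE->.
have logn0 r : r \notin primes n -> logn r n = 0.
  by rewrite -logn_gt0 lt0n negbK => /eqP.
rewrite /Mp_local eqxx in loc_p.
set qs := [seq q <- primes n | q != p].
have qs_pr : all prime qs.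
  by apply/allP => q; rewrite mem_filter mem_primes => /andP[_ /and3P[]].
have uniq_qs : uniq qs by rewrite filter_uniq ?primes_uniq.
exists (logn p n), qs.
split; [split; [|split; [|split; [|split]]] | split; [|split]].
- have [->//|/loc_p] := posnP (logn p n).
  by case/orP=> [/andP[/eqP-> _]|/and3P[/eqP-> _ _]].
- exact: uniq_qs.
- exact: qs_pr.
- by rewrite mem_filter eqxx.
- apply: eqn_from_log => //.
    by rewrite muln_gt0 expn_gt0 prime_gt0 ?prod_primes_gt0.
  move=> r; rewrite logn_pexp_prod //.
  rewrite mem_filter; case: eqVneq => [->|ne_rp]; first by rewrite mul1n addn0.
  have [r_in|/logn0//] := boolP (r \in primes n).
  by have /and3P[/eqP-> _ _] := loc_q r r_in ne_rp.
- move=> q; rewrite mem_filter => /andP[ne_qp q_in].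
  by have /and3P[_ -> /eqP] := loc_q q q_in ne_qp.
- by move=> s1; have := loc_p; rewrite s1 orbF andTb; apply.
by move=> s2; have := loc_p; rewrite s2 /= => /(_ isT) /andP[-> /eqP].
Qed.

Lemma Mp_local_of_factorization p n : prime p ->
  Mp_factorization p n -> all (fun q => Mp_local p n q (logn q n)) (primes n).
Proof.
move=> p_pr [s [qs [[le_s2 [uniq_qs [qs_pr [p_nin def_n]]]] [qs_cond [s1 s2]]]]].
apply/allP => q q_in; have logq_gt0 : 0 < logn q n by rewrite logn_gt0.
have q_pr : prime q by move: q_in; rewrite mem_primes => /andP[].
have logq : logn q n = (q == p) * s + (q \in qs) by rewrite {1}def_n logn_pexp_prod.
rewrite /Mp_local logq in logq_gt0 *; case: eqVneq => [->|ne_qp] in logq_gt0 *.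
  rewrite mul1n (negbTE p_nin) addn0 in logq_gt0 *.
  case: s le_s2 s1 s2 {def_n logq} logq_gt0 => [|[|[|]]] //= _ s1 s2 _.
    by rewrite s1.
  by case: s2 => // -> /eqP.
rewrite mul0n add0n in logq_gt0 *.
have q_qs : q \in qs by case: (q \in qs) logq_gt0.
by have [-> /eqP dvd_q] := qs_cond q q_qs; rewrite q_qs.
Qed.

Theorem theorem1 (p n : nat) (hp : prime p) (hn : 0 < n) :
  S n n = p %[mod n] <->
  exists (s : nat) (qs : seq nat),
    (s <= 2 /\ uniq qs /\ all prime qs /\ p \notin qs /\
     n = p ^ s * \prod_(q <- qs) q) /\
    (forall q, q \in qs -> (q.-1 %| n) /\ (n %/ q + p) %% q = 0) /\
    (s = 1 -> ~~ (p.-1 %| n)) /\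
    (s = 2 -> (p.-1 %| n) /\ (n %/ p ^ 2 + 1) %% p = 0).
Proof.
apply: (iff_trans (rwP eqP)); rewrite eqn_S_self_mod_prime //.
by split; [exact: Mp_factorization_of_local | exact: Mp_local_of_factorization].
Qed.
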